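(* Suppose the strict partition $\lambda$ is shifted-balanced of Type (1) or Type (2). Then there exist integers $r_{ij}$, $[i,j]\in P^{\mathrm{shift}}_\lambda$, such that: (a) for every box $[i,j]\in P^{\mathrm{shift}}_\lambda$ with $i\ne j$: $\sum_{[i',j]\in P^{\mathrm{shift}}_\lambda}r_{i',j}=2$ and $\sum_{[i,j']\in P^{\mathrm{shift}}_\lambda}r_{i,j'}=2$; (b) for every box $[i,i]\in P^{\mathrm{shift}}_\lambda$: $\sum_{i'\le i,\ j'\le i}r_{i',j'}+\sum_{i'\ge i,\ j'\ge i}r_{i',j'}=4$ (sums over boxes $[i',j']\in P^{\mathrm{shift}}_\lambda$); (c) for every outward corner $c\in C^{\mathrm{shift}}(\lambda)$: $\sum_{[i,j]\in P^{\mathrm{shift}}_\lambda,\ c\in C^{\mathrm{shift}}_{ij}(\lambda)}r_{ij}=0$.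
   Context: $\delta_n=(n,n-1,\ldots,1)$, $b^a=(b,\ldots,b)$ ($a$ parts), partition sums are componentwise. A partition $\nu$ is balanced as a straight shape with height and width $k$ if $\ell(\nu)=\nu_1=k$ (or $\nu=\varnothing$ when $k=0$) and for every $1\le i\le k-1$ with $\nu_i>\nu_{i+1}$, $i+\nu_{i+1}=k$. A strict partition $\lambda$ is shifted-balanced of Type (1) if $\lambda=\delta_n+\nu$ and of Type (2) if $\lambda=\delta_n+\nu+(n-1-k)^n$, for some $0\le k<n$ and $\nu$ balanced with height and width $k$. $P^{\mathrm{shift}}_\lambda$ is the set of boxes $[i,j]$ with $1\le i\le\ell(\lambda)$, $i\le j\le i+\lambda_i-1$. $C^{\mathrm{shift}}(\lambda)$ is the set of corners $c_t$ for $1\le t\le\ell(\lambda)-1$ with $\lambda_t-\lambda_{t+1}\ge2$, where $c_t$ occurs at the lattice point $(t,t+\lambda_{t+1})$ (box $[i,j]$ having southeast corner $(i,j)$); $C^{\mathrm{shift}}_{ij}(\lambda)$ consists of those $c_t$ with $t\ge i$ and $t+\lambda_{t+1}\ge j$. *)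

From mathcomp Require Import all_boot all_order all_algebra.
Set Implicit Arguments. Unset Strict Implicit. Unset Printing Implicit Defensive.

(* Partitions are represented as seq nat (parts listed in order). Parts are
   1-indexed in the paper: part(lam, i) = lambda_i, and = 0 beyond the length. *)
Definition part (lam : seq nat) (i : nat) : nat := nth 0 lam i.-1.

Definition is_partition (lam : seq nat) : bool :=
  sorted (fun a b => b <= a) lam && all (fun x => 0 < x) lam.

Definition is_strict_partition (lam : seq nat) : bool :=
  sorted (fun a b => b < a) lam && all (fun x => 0 < x) lam.

Definition delta (n : nat) : seq nat := [seq n - i | i <- iota 0 n].

Definition rect (b a : nat) : seq nat := nseq a b.

Definition padd (s t : seq nat) : seq nat :=
  mkseq (fun i => nth 0 s i + nth 0 t i) (maxn (size s) (size t)).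

Definition balanced (nu : seq nat) (k : nat) : Prop :=
  is_partition nu /\
  (if k == 0 then nu = [::] else size nu = k /\ part nu 1 = k) /\
  (forall i, 1 <= i <= k.-1 -> part nu i > part nu i.+1 -> i + part nu i.+1 = k).

Definition shifted_balanced_type1 (lam : seq nat) : Prop :=
  exists n k nu, k < n /\ balanced nu k /\ lam = padd (delta n) nu.

Definition shifted_balanced_type2 (lam : seq nat) : Prop :=
  exists n k nu, k < n /\ balanced nu k /\
    lam = padd (padd (delta n) nu) (rect (n.-1 - k) n).

Definition boxes (lam : seq nat) : seq (nat * nat) :=
  flatten [seq [seq (i, j) | j <- iota i (part lam i)] | i <- iota 1 (size lam)].

(* outward corners, indexed by t: 1 <= t <= l(lam)-1 with lam_t - lam_{t+1} >= 2;
   corner c_t sits at lattice point (t, t + lam_{t+1}). *)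
Definition corner_idx (lam : seq nat) : seq nat :=
  [seq t <- iota 1 (size lam).-1 | part lam t.+1 + 2 <= part lam t].

Definition in_Cij (lam : seq nat) (t i j : nat) : bool :=
  (i <= t) && (j <= t + part lam t.+1).

From mathcomp Require Import all_boot all_order all_algebra zify ring.

(** Let [n] be the length of [lam] and [lam_1 = n + K].  Put [a = 3 - n + K]
    on every diagonal box [[i,i]], [2 - a] on every box [[i,i+1]] with [i < n],
    [2] on every box [[1,j]] with [j > n], and subtract [2K] at [[1,1]].
    The row and the column through an off-diagonal box then sum to [2]: the
    only row that could fail is row [n], which reaches past the diagonal only
    in Type (2), where [K = n - 1] and so [a = 2].  The two halves of the hook
    at [[i,i]] cover every diagonal box ([[i,i]] twice) and every box
    [[i,i+1]] once, while the first row contributes [-2K] net, giving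
    [a(n+1) + (2-a)(n-1) - 2K = 4].  Balancedness says exactly that every
    outward corner [c_t] lies on the antidiagonal [i + j = n + K]; hence the
    boxes counted by [c_t] carry [at + (2-a)t + 2(K-t) - 2K = 0]. *)

Set Implicit Arguments.
Unset Strict Implicit.
Unset Printing Implicit Defensive.

Import GRing.Theory Num.Theory.
Local Open Scope ring_scope.

Lemma big_seq_indicator (T : eqType) (V : nmodType) (B s : seq T) (P Q : pred T) (c : V) :
  uniq B -> uniq s -> (forall b, (b \in B) && Q b = (b \in s)) ->
  \sum_(b <- B | P b) (if Q b then c else 0) = c *+ count P s.
Proof.
move=> uB us BQs; rewrite -big_mkcondr.
rewrite (eq_bigl (fun b => Q b && P b)) => [|b]; last by rewrite andbC.
rewrite -big_filter_cond (perm_big s); last first.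
  by apply: uniq_perm; rewrite ?filter_uniq // => b; rewrite mem_filter andbC BQs.
rewrite big_const_seq; elim: (count P s) => [|m IHm] //=.
by rewrite IHm mulrS.
Qed.

Lemma count_iota_le (P : pred nat) t m L : P =1 (fun i => i <= t)%N ->
  count P (iota m L) = minn L (t.+1 - m).
Proof.
move/eq_count->; elim: L m => [|L IHL] m /=; first by rewrite min0n.
by rewrite IHL; case: leqP; lia.
Qed.

Lemma count_iota_ge (P : pred nat) t m L : P =1 (fun i => t <= i)%N ->
  count P (iota m L) = (L - minn L (t - m))%N.
Proof.
move/eq_count->; elim: L m => [|L IHL] m //=.
by rewrite IHL; case: leqP; lia.
Qed.

Lemma count_iota_eq (P : pred nat) t m L : P =1 pred1 t ->
  count P (iota m L) = (m <= t < m + L)%N.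
Proof. by move/eq_count->; rewrite count_uniq_mem ?iota_uniq ?mem_iota. Qed.

Lemma count_const (T : Type) (b : bool) (s : seq T) : count (fun=> b) s = (b * size s)%N.
Proof. by case: b; rewrite ?count_predT ?count_pred0 ?mul1n. Qed.

Lemma mem_graph_iota (f : nat -> nat) m L i j :
  ((i, j) \in [seq (k, f k) | k <- iota m L]) = (j == f i) && (m <= i < m + L)%N.
Proof.
apply/mapP/andP => [[k + [-> ->]]|[/eqP-> ?]]; first by rewrite mem_iota eqxx.
by exists i; rewrite ?mem_iota.
Qed.

Lemma mem_row_iota (r : nat) m L i j :
  ((i, j) \in [seq (r, k) | k <- iota m L]) = (i == r) && (m <= j < m + L)%N.
Proof.
apply/mapP/andP => [[k + [-> ->]]|[/eqP-> ?]]; first by rewrite mem_iota eqxx.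
by exists j; rewrite ?mem_iota.
Qed.

Lemma mem_boxes (lam : seq nat) (i j : nat) :
  ((i, j) \in boxes lam) = [&& 0 < i, i <= size lam, i <= j & j < i + part lam i]%N.
Proof.
apply/flattenP/idP => [[s /mapP [i' + ->] /mapP [j' + [-> ->]]]|bij].
  by rewrite !mem_iota; lia.
exists [seq (i, j') | j' <- iota i (part lam i)]; apply/mapP.
  by exists i; rewrite ?mem_iota //; lia.
by exists j; rewrite ?mem_iota //; lia.
Qed.

Lemma uniq_boxes (lam : seq nat) : uniq (boxes lam).
Proof.
rewrite /boxes; elim: (size lam) 1%N => [|m IHm] i0 //=.
rewrite cat_uniq IHm andbT map_inj_uniq ?iota_uniq => [|x y [] //].
apply/hasPn => _ /flattenP [s /mapP [i + ->] /mapP [j _ ->]].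
by rewrite mem_iota => ?; apply/mapP => -[j' _ [?]]; lia.
Qed.

Section StrictPartition.
Variable lam : seq nat.
Hypothesis lam_strict : is_strict_partition lam.

Lemma strict_part_gt0 i : (0 < i <= size lam)%N -> (0 < part lam i)%N.
Proof.
case/andP: lam_strict => _ /allP pos.
by case: i => //= i ilam; apply: pos; rewrite /part; exact: mem_nth.
Qed.

Lemma strict_part_ltn i : (0 < i < size lam)%N -> (part lam i.+1 < part lam i)%N.
Proof.
case/andP: lam_strict => /(sortedP 0) step _; rewrite /part.
by case: i => //= i ilam; apply: step.
Qed.

Lemma strict_part_addn_mono i j :
  (0 < i <= j)%N -> (j <= size lam)%N -> (part lam j + j <= part lam i + i)%N.
Proof.
move=> ij; elim: j ij => [|j IHj] ij jlam; first by lia.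
have [->|i_neq] := eqVneq i j.+1; first by [].
have := @strict_part_ltn j; have := IHj; lia.
Qed.

End StrictPartition.

Lemma size_padd s t : size (padd s t) = maxn (size s) (size t).
Proof. by rewrite size_mkseq. Qed.

Lemma part_padd s t i : part (padd s t) i = (part s i + part t i)%N.
Proof.
rewrite /part; case: (ltnP i.-1 (maxn (size s) (size t))) => [i_st|st_i].
  by rewrite nth_mkseq.
by rewrite !nth_default ?size_padd //; apply: leq_trans st_i; rewrite leq_max leqnn ?orbT.
Qed.

Lemma padd_nseq0 s : padd s (nseq (size s) 0%N) = s.
Proof.
apply: (@eq_from_nth _ 0%N); rewrite size_padd size_nseq ?maxnn // => i i_s.
by rewrite -[i]/(i.+1.-1) -/(part _ _) part_padd /part nth_nseq i_s addn0.
Qed.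

Lemma size_delta n : size (delta n) = n.
Proof. by rewrite size_map size_iota. Qed.

Lemma part_delta n i : (0 < i)%N -> part (delta n) i = (n.+1 - i)%N.
Proof.
rewrite /part; case: (ltnP i.-1 n) => [i_n|n_i] i_gt0.
  by rewrite (nth_map 0%N) ?size_iota // nth_iota //; lia.
by rewrite nth_default ?size_delta //; lia.
Qed.

Lemma part_rect c n i : (0 < i <= n)%N -> part (rect c n) i = c.
Proof. by move=> i_n; rewrite /part nth_nseq; case: ifP => //; lia. Qed.

Lemma size_balanced nu k : balanced nu k -> size nu = k /\ part nu 1 = k.
Proof. by case=> _ [+ _]; case: eqP => [-> ->|]. Qed.

Lemma balanced_descent nu k t : balanced nu k -> (0 < t)%N ->
  (part nu t.+1 < part nu t)%N -> (t + part nu t.+1)%N = k.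
Proof.
move=> nu_bal t_gt0 descent; have [size_nu part_nu1] := size_balanced nu_bal.
case: nu_bal => _ [_ descents]; case: (ltngtP t k) => [t_k|k_t|->].
- by apply: descents; lia.
- by move: descent; rewrite /part !nth_default //; lia.
- by rewrite /part nth_default ?addn0 ?size_nu.
Qed.

Definition corners_on_antidiagonal (lam : seq nat) (m : nat) : Prop :=
  forall t, t \in corner_idx lam -> (t + (t + part lam t.+1))%N = m.

(* Type (1) is the case [c = 0], by [padd_nseq0]. *)
Lemma shifted_balanced_frame n k nu c :
  (k < n)%N -> balanced nu k -> c = 0%N \/ c = (n.-1 - k)%N ->
  let lam := padd (padd (delta n) nu) (rect c n) in
  [/\ size lam = n, part lam 1 = (n + (k + c))%N,
      (1 < part lam n)%N -> (k + c).+1 = n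
    & corners_on_antidiagonal lam (n + (k + c))].
Proof.
move=> k_n nu_bal c_cases lam; have [size_nu part_nu1] := size_balanced nu_bal.
have part_lam i : (0 < i <= n)%N -> part lam i = (n.+1 - i + part nu i + c)%N.
  by move=> i_n; rewrite !part_padd part_delta ?part_rect //; lia.
have size_lam : size lam = n.
  by rewrite !size_padd size_delta size_nu size_nseq; lia.
split => //.
- by rewrite part_lam ?part_nu1; lia.
- by rewrite part_lam ?[part nu n]nth_default ?size_nu; lia.
- move=> t; rewrite /corner_idx mem_filter mem_iota size_lam => /andP [gap t_n].
  move: gap; rewrite !part_lam; [|lia..] => gap.
  by have := balanced_descent nu_bal (t := t); lia.
Qed.

Lemma shifted_balanced_frame_exists lam :
  shifted_balanced_type1 lam \/ shifted_balanced_type2 lam ->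
  exists n K, [/\ (0 < n)%N, size lam = n, part lam 1 = (n + K)%N,
    (1 < part lam n)%N -> K.+1 = n & corners_on_antidiagonal lam (n + K)].
Proof.
case=> [[n [k [nu [k_n [nu_bal ->]]]]] | [n [k [nu [k_n [nu_bal ->]]]]]].
- have [size_nu _] := size_balanced nu_bal.
  have size_sum : size (padd (delta n) nu) = n.
    by rewrite size_padd size_delta size_nu (maxn_idPl (ltnW k_n)).
  have -> : padd (delta n) nu = padd (padd (delta n) nu) (rect 0 n).
    by rewrite /rect -[X in nseq X _]size_sum padd_nseq0.
  have [? ? ? ?] := shifted_balanced_frame k_n nu_bal (or_introl erefl).
  by exists n, (k + 0)%N; split => //; lia.
- have [? ? ? ?] := shifted_balanced_frame k_n nu_bal (or_intror erefl).
  by exists n, (k + (n.-1 - k))%N; split => //; lia.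
Qed.

Section ShiftedWeight.
Variables (lam : seq nat) (n K : nat).
Hypotheses (lam_strict : is_strict_partition lam) (n_gt0 : (0 < n)%N)
  (size_lam : size lam = n) (part_lam1 : part lam 1 = (n + K)%N)
  (* In Type (1) the last part is 1; in Type (2), K = n - 1. *)
  (last_part : (1 < part lam n)%N -> K.+1 = n)
  (corners : corners_on_antidiagonal lam (n + K)).

Local Notation a := (3 - n%:Z + K%:Z).

Definition shifted_weight (i j : nat) : int :=
  (if i == j then a else 0) + (if (j == i.+1) && (i < n)%N then 2 - a else 0)
  + (if (i == 1%N) && (n < j)%N then 2 else 0)
  - (if (i == 1%N) && (j == 1%N) then K%:Z *+ 2 else 0).

Lemma part_addn_gt i : (0 < i <= n)%N -> (n < part lam i + i)%N.
Proof.
move=> i_n; have := strict_part_addn_mono lam_strict (i := i) (j := n).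
by have := strict_part_gt0 lam_strict (i := n); rewrite size_lam; lia.
Qed.

Lemma part_addn_le i : (0 < i <= n)%N -> (part lam i + i <= n + K + 1)%N.
Proof.
by move=> i_n; have := strict_part_addn_mono lam_strict (i := 1) (j := i); lia.
Qed.


Lemma diag_boxes (b : nat * nat) :
  (b \in boxes lam) && (b.1 == b.2) = (b \in [seq (i, i) | i <- iota 1 n]).
Proof.
case: b => i j; rewrite mem_boxes (mem_graph_iota id) size_lam /=.
by have := @part_addn_gt i; lia.
Qed.

Lemma superdiag_boxes (b : nat * nat) :
  (b \in boxes lam) && ((b.2 == b.1.+1) && (b.1 < n)%N) =
  (b \in [seq (i, i.+1) | i <- iota 1 n.-1]).
Proof.
case: b => i j; rewrite mem_boxes (mem_graph_iota succn) size_lam /=.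
by have := @part_addn_gt i; lia.
Qed.

Lemma first_row_tail_boxes (b : nat * nat) :
  (b \in boxes lam) && ((b.1 == 1%N) && (n < b.2)%N) =
  (b \in [seq (1%N, j) | j <- iota n.+1 K]).
Proof.
case: b => i j; rewrite mem_boxes mem_row_iota size_lam /=.
by case: (eqVneq i 1%N) => [->|]; rewrite ?part_lam1; lia.
Qed.

Lemma corner_box (b : nat * nat) :
  (b \in boxes lam) && ((b.1 == 1%N) && (b.2 == 1%N)) = (b \in [:: (1%N, 1%N)]).
Proof.
case: b => i j; rewrite mem_boxes inE xpair_eqE size_lam /=.
by case: (eqVneq i 1%N) => [->|]; rewrite ?part_lam1; lia.
Qed.

Lemma sum_shifted_weight (P : pred (nat * nat)) :
  \sum_(b <- boxes lam | P b) shifted_weight b.1 b.2 =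
    a *+ count (fun i => P (i, i)) (iota 1 n)
  + (2 - a) *+ count (fun i => P (i, i.+1)) (iota 1 n.-1)
  + 2 *+ count (fun j => P (1%N, j)) (iota n.+1 K)
  - K%:Z *+ 2 *+ P (1%N, 1%N).
Proof.
rewrite sumrB !big_split /=.
rewrite (big_seq_indicator P a (uniq_boxes lam) _ diag_boxes).
rewrite (big_seq_indicator P (2 - a) (uniq_boxes lam) _ superdiag_boxes).
rewrite (big_seq_indicator P 2 (uniq_boxes lam) _ first_row_tail_boxes).
rewrite (big_seq_indicator P (K%:Z *+ 2) (uniq_boxes lam) _ corner_box) //.
  by rewrite !count_map /= addn0.
all: by rewrite map_inj_uniq ?iota_uniq // => x y [].
Qed.

Lemma shifted_weight_column_sum i j : (i, j) \in boxes lam -> i != j ->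
  \sum_(b <- boxes lam | b.2 == j) shifted_weight b.1 b.2 = 2.
Proof.
rewrite mem_boxes size_lam => ij_box i_neq_j; rewrite sum_shifted_weight /=.
rewrite (count_iota_eq (t := j)) // (count_iota_eq (t := j.-1)) => [|k /=]; last by lia.
rewrite (count_iota_eq (t := j)) //.
have := @part_addn_le i; lia.
Qed.

Lemma shifted_weight_row_sum i j : (i, j) \in boxes lam -> i != j ->
  \sum_(b <- boxes lam | b.1 == i) shifted_weight b.1 b.2 = 2.
Proof.
rewrite mem_boxes size_lam => ij_box i_neq_j; rewrite sum_shifted_weight /=.
rewrite (count_iota_eq (t := i)) // (count_iota_eq (t := i)) // count_const size_iota.
have last_row : i = n -> K.+1 = n by move=> i_n; apply: last_part; rewrite -i_n; lia.
lia.
Qed.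

Lemma shifted_weight_diagonal_sum i : (i, i) \in boxes lam ->
    \sum_(b <- boxes lam | (b.1 <= i)%N && (b.2 <= i)%N) shifted_weight b.1 b.2
  + \sum_(b <- boxes lam | (i <= b.1)%N && (i <= b.2)%N) shifted_weight b.1 b.2 = 4.
Proof.
rewrite mem_boxes size_lam => ii_box; rewrite !sum_shifted_weight /=.
rewrite (count_iota_le (t := i)) => [|k]; last by lia.
rewrite (count_iota_le (t := i.-1)) => [|k]; last by lia.
rewrite (@eq_in_count _ _ (fun=> false) (iota n.+1 K)) => [|k]; last by rewrite mem_iota; lia.
rewrite count_const.
rewrite (count_iota_ge (t := i)) => [|k]; last by lia.
rewrite (count_iota_ge (t := i)) => [|k]; last by lia.
rewrite (@eq_in_count _ _ (fun=> i <= 1)%N (iota n.+1 K)) => [|k]; last by rewrite mem_iota; lia.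
rewrite count_const size_iota (_ : (0 < i)%N) /=; last by lia.
have [p [q [i_eq n_eq]]] : exists p q, i = p.+1 /\ n = (i + q)%N.
  by exists i.-1, (n - i)%N; lia.
have -> : minn n (i.+1 - 1) = i by lia.
have -> : minn n.-1 (i.-1.+1 - 1) = p by lia.
have -> : (n - minn n (i - 1))%N = q.+1 by lia.
have -> : (n.-1 - minn n.-1 (i - 1))%N = q by lia.
rewrite n_eq i_eq; case: (p.+1 <= 1)%N => /=; ring.
Qed.

Lemma shifted_weight_corner_sum t : t \in corner_idx lam ->
  \sum_(b <- boxes lam | in_Cij lam t b.1 b.2) shifted_weight b.1 b.2 = 0.
Proof.
move=> t_corner; have := corners t_corner; have := @part_addn_gt t.+1.
move: t_corner; rewrite /corner_idx mem_filter mem_iota size_lam => /andP [_ t_n].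
move=> part_gt corner_diag; rewrite sum_shifted_weight /in_Cij /=.
rewrite (count_iota_le (t := t)) => [|k]; last by lia.
rewrite (count_iota_le (t := t)) => [|k]; last by lia.
rewrite (count_iota_le (t := t + part lam t.+1)) => [|k]; last by lia.
have [u K_eq] : exists u, K = (t + u)%N by exists (K - t)%N; lia.
have -> : minn n (t.+1 - 1) = t by lia.
have -> : minn n.-1 (t.+1 - 1) = t by lia.
have -> : minn K ((t + part lam t.+1).+1 - n.+1) = u by lia.
rewrite (_ : (0 < t)%N && _) /=; last by lia.
by rewrite K_eq; ring.
Qed.

End ShiftedWeight.

Theorem lemma5p5 (lam : seq nat) :
  is_strict_partition lam ->
  shifted_balanced_type1 lam \/ shifted_balanced_type2 lam ->
  exists r : nat -> nat -> int,
    (forall b, b \in boxes lam -> b.1 != b.2 ->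
       \sum_(b' <- boxes lam | b'.2 == b.2) r b'.1 b'.2 = 2 /\
       \sum_(b' <- boxes lam | b'.1 == b.1) r b'.1 b'.2 = 2) /\
    (forall b, b \in boxes lam -> b.1 == b.2 ->
       \sum_(b' <- boxes lam | (b'.1 <= b.1)%N && (b'.2 <= b.1)%N) r b'.1 b'.2
     + \sum_(b' <- boxes lam | (b.1 <= b'.1)%N && (b.1 <= b'.2)%N) r b'.1 b'.2 = 4) /\
    (forall t, t \in corner_idx lam ->
       \sum_(b' <- boxes lam | in_Cij lam t b'.1 b'.2) r b'.1 b'.2 = 0).
Proof.
move=> lam_strict /shifted_balanced_frame_exists
  [n [K [n_gt0 size_lam part_lam1 last_part corners]]].
exists (shifted_weight n K); split; [|split].
- move=> [i j] /= ij_box i_neq_j; split.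
  + exact: shifted_weight_column_sum ij_box i_neq_j.
  + exact: shifted_weight_row_sum ij_box i_neq_j.
- by move=> [i j] /= ij_box /eqP i_eq_j; subst j; apply: shifted_weight_diagonal_sum.
- by move=> t; apply: shifted_weight_corner_sum.
Qed.
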